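(* Let $G$ be a crown-free linear $3$-graph and let $e=\{x,y,z\} \in E(G)$ be an edge with $D(e) \geq \langle 5,5,4\rangle$. Let $$S = \bigcup_{f \in E(G),\ f \cap \{x,y,z\} \neq \emptyset} f$$ be the set of all vertices lying on an edge that meets $\{x,y,z\}$, and let $$E_S = \{f \in E(G) : f \cap S \neq \emptyset\}.$$ Then $|S| = 11$, every vertex in $S$ has degree at most $5$, $|E_S| \leq 13$, and every edge in $E_S$ is a subset of $S$. In other words, the subgraph $G[S]$ is a connected component of $G$.
   Context: A linear $3$-graph $G=(V,E)$ consists of a finite vertex set $V$ and a collection $E$ of $3$-element subsets of $V$ (edges) such that any two distinct edges share at most one vertex. The degree $d(v)$ of a vertex $v$ is the number of edges containing $v$. For an edge $e$ and positive integers $a \geq b \geq c$, write $D(e) \geq \langle a,b,c\rangle$ if one can write $e=\{u,v,w\}$ with $d(u)\geq a$, $d(v) \geq b$, $d(w) \geq c$. The crown $C_{13}$ is the linear $3$-graph on $9$ vertices $\{a,b,c,d,e,f,g,h,i\}$ with edges $\{a,b,c\},\{a,d,e\},\{b,f,g\},\{c,h,i\}$. A linear $3$-graph is crown-free if it contains no copy of $C_{13}$. *)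

From mathcomp Require Import all_boot.
Set Implicit Arguments. Unset Strict Implicit. Unset Printing Implicit Defensive.

Definition linear3 (T : finType) (E : {set {set T}}) : Prop :=
  (forall f, f \in E -> #|f| = 3) /\
  (forall f g, f \in E -> g \in E -> f != g -> #|f :&: g| <= 1).

Definition deg (T : finType) (E : {set {set T}}) (v : T) : nat :=
  #|[set f in E | v \in f]|.

Definition has_crown (T : finType) (E : {set {set T}}) : Prop :=
  exists (a b c d e f g h i : T),
    uniq [:: a; b; c; d; e; f; g; h; i] /\
    [set a; b; c] \in E /\ [set a; d; e] \in E /\
    [set b; f; g] \in E /\ [set c; h; i] \in E.

Definition crown_free (T : finType) (E : {set {set T}}) : Prop := ~ has_crown E.

From mathcomp Require Import all_boot.
Set Implicit Arguments. Unset Strict Implicit. Unset Printing Implicit Defensive.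

(* Write e = {x, y, z}.  Crown-freeness at a centre {a, b, c} says that, once legs
   B at b and C at c are fixed disjointly, every other edge at a meets B or C outside b
   and c.  Counting these meetings gives deg x <= 5, hence deg x = 5, and shows that
   every vertex on an edge at y or z already lies on an edge at x; so S is the closed
   neighbourhood N[x], of size 2 deg x + 1 = 11.
   The same counting makes the edges at x and y around a further edge {z, a1, a3} close
   up into a wing {x,a1,a2}, {x,a3,a4}, {y,a1,a4}, {y,a3,a2}.  Two z-edges with disjoint
   wings exhaust the five edges at x, so S is e together with the two wings.  An edge
   avoiding e but meeting a wing is a leg at a centre {x, w, p} whose other leg is a wing
   edge, which puts it inside N[x].  In a wing every pair except {a2, a4} lies on an edge
   through x, y or z, so besides the 9 edges at x or y only the two z-edges and one edge
   through each of {a2, a4}, {b2, b4} meet S. *)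

Definition nbhd (T : finType) (E : {set {set T}}) (v : T) : {set T} :=
  \bigcup_(f in E | v \in f) f.

Lemma disjointP (T : finType) (A B : {set T}) :
  reflect (forall u, u \in A -> u \in B -> False) [disjoint A & B].
Proof.
apply: (iffP pred0P) => [AB u uA uB | AB u /=]; first by have := AB u; rewrite /= uA uB.
by apply/negP => /andP[/AB].
Qed.

Lemma set3_neq (T : finType) (a b c : T) :
  #|[set a; b; c]| = 3 -> [/\ a != b, a != c & b != c].
Proof.
rewrite -setUA !cardsU1 cards1 !inE.
by have [?|] := eqVneq a b; have [?|] := eqVneq a c; have [?|] := eqVneq b c;
  subst; rewrite ?eqxx.
Qed.

Lemma set3C12 (T : finType) (a b c : T) : [set a; b; c] = [set b; a; c].
Proof. by apply/setP => u; rewrite !inE (orbC (u == a)). Qed.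

Lemma set3C23 (T : finType) (a b c : T) : [set a; b; c] = [set a; c; b].
Proof. by apply/setP => u; rewrite !inE orbAC. Qed.

Lemma set31 (T : finType) (a b c : T) : a \in [set a; b; c].
Proof. by rewrite !inE eqxx. Qed.

Lemma set32 (T : finType) (a b c : T) : b \in [set a; b; c].
Proof. by rewrite !inE eqxx orbT. Qed.

Lemma set33 (T : finType) (a b c : T) : c \in [set a; b; c].
Proof. by rewrite !inE eqxx !orbT. Qed.

Lemma disjoint_set3 (T : finType) (A : {set T}) u v w :
  [disjoint [set u; v; w] & A] = [&& u \notin A, v \notin A & w \notin A].
Proof.
apply/disjointP/and3P => [D|[uA vA wA] t].
  by split; apply/negP => /D; apply; rewrite !inE eqxx ?orbT.
by rewrite !inE -!orbA => /or3P[]/eqP-> tA; rewrite tA in uA vA wA.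
Qed.

Lemma set3P (T : finType) (a b c u : T) :
  reflect [\/ u = a, u = b | u = c] (u \in [set a; b; c]).
Proof.
rewrite !inE -!orbA; apply: (iffP or3P) => -[] /eqP H;
  by [constructor 1 | constructor 2 | constructor 3].
Qed.

Lemma set4P (T : finType) (a b c d u : T) :
  reflect [\/ u = a, u = b, u = c | u = d] (u \in [set a; b; c; d]).
Proof.
rewrite !inE -!orbA; apply: (iffP or4P) => -[] /eqP H;
  by [constructor 1 | constructor 2 | constructor 3 | constructor 4].
Qed.

Section LinearCrownFree.
Variables (T : finType) (E : {set {set T}}).
Hypothesis card_edge : forall f, f \in E -> #|f| = 3.
Hypothesis linearE : forall f g, f \in E -> g \in E -> f != g -> #|f :&: g| <= 1.
Hypothesis crown_freeE : crown_free E.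

Lemma edge_neq a b c : [set a; b; c] \in E -> [/\ a != b, a != c & b != c].
Proof. by move/card_edge/set3_neq. Qed.

Lemma edge_eq f g u v : f \in E -> g \in E -> u != v ->
  u \in f -> v \in f -> u \in g -> v \in g -> f = g.
Proof.
move=> fE gE uv uf vf ug vg; apply/eqP; apply: contraNT uv => fg.
by apply/eqP/(card_le1_eqP (linearE fE gE fg)); rewrite inE ?uf ?ug ?vf ?vg.
Qed.

Lemma notin_edge f g u v : f \in E -> g \in E -> f != g ->
  u \in f -> u \in g -> v \in f -> v != u -> v \notin g.
Proof.
move=> fE gE fg uf ug vf vu; apply: contraNN fg => vg.
by apply/eqP; apply: (edge_eq fE gE vu).
Qed.

Lemma edge_set3 f a b c : f \in E -> a \in f -> b \in f -> c \in f ->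
  a != b -> a != c -> b != c -> f = [set a; b; c].
Proof.
move=> fE af bf cf ab ac bc; apply/eqP; rewrite eq_sym eqEcard (card_edge fE).
apply/andP; split; first by apply/subsetP => u; rewrite !inE -!orbA => /or3P[] /eqP->.
by rewrite -setUA !cardsU1 cards1 !inE negb_or ab ac bc.
Qed.

Lemma card_edgeD1 f u : f \in E -> u \in f -> #|f :\ u| = 2.
Proof. by move=> fE uf; apply/eqP; rewrite -eqSS -(card_edge fE) (cardsD1 u f) uf. Qed.

Lemma edge_through f a : f \in E -> a \in f -> exists b c, f = [set a; b; c].
Proof.
move=> fE af; have /cards2P[b [c [_ fDa]]] : #|f :\ a| == 2 by rewrite card_edgeD1.
by exists b, c; rewrite -(setD1K af) fDa setUA.
Qed.

Lemma edge_through2 f a b : f \in E -> a \in f -> b \in f -> a != b ->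
  exists c, f = [set a; b; c].
Proof.
move=> fE af bf ab; have [b' [c ef]] := edge_through fE af.
move: bf; rewrite ef !inE -!orbA => /or3P[/eqP ba|/eqP->|/eqP->]; first by rewrite ba eqxx in ab.
  by exists c.
by exists b'; apply/setP => u; rewrite !inE orbAC.
Qed.

Lemma no_crown a b c A B C : [set a; b; c] \in E ->
  A \in E -> B \in E -> C \in E -> a \in A -> b \in B -> c \in C ->
  [disjoint A & B] -> [disjoint A & C] -> [disjoint B & C] -> False.
Proof.
move=> abcE AE BE CE aA bB cC AB AC BC.
have [d [d' eA]] := edge_through AE aA.
have [f [f' eB]] := edge_through BE bB.
have [h [h' eC]] := edge_through CE cC.
apply: crown_freeE; exists a, b, c, d, d', f, f', h, h'.
rewrite -eA -eB -eC; split=> //; apply/card_uniqP; rewrite -cardsE.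
have -> : [set u in [:: a; b; c; d; d'; f; f'; h; h']] = A :|: B :|: C.
  by rewrite eA eB eC; apply/setP => u; rewrite !inE; do !case: (_ == _).
rewrite !cardsU setIUl (disjoint_setI0 AB) (disjoint_setI0 AC) (disjoint_setI0 BC).
by rewrite setU0 cards0 !subn0 !card_edge.
Qed.

Lemma deg_le_hitting v (P : {set T}) (X : {set {set T}}) : v \notin P ->
  (forall f, f \in E -> v \in f -> f \notin X -> ~~ [disjoint f & P]) ->
  deg E v <= #|P| + #|X|.
Proof.
move=> vP hit; pose M := [set f in E | (v \in f) && ~~ [disjoint f & P]].
have sub : [set f in E | v \in f] \subset M :|: X.
  apply/subsetP => f; rewrite inE => /andP[fE vf]; rewrite in_setU.
  by have [|fX] := boolP (f \in X); rewrite ?orbT // inE fE vf hit.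
apply: leq_trans (subset_leq_card sub) _; apply: leq_trans (leq_card_setU _ _) _.
rewrite leq_add2r; pose pt f := odflt v [pick p in f :&: P].
have ptP f : f \in M -> pt f \in f :&: P.
  rewrite inE => /and3P[_ _]; rewrite -setI_eq0 => /set0Pn[p pfP].
  by rewrite /pt; case: pickP => [q|/(_ p)] /=; rewrite ?pfP.
have pt_inj : {in M &, injective pt}.
  move=> f g fM gM eq_pt; have /setIP[ptf ptP'] := ptP f fM.
  have := ptP g gM; rewrite -eq_pt => /setIP[ptg _].
  move: fM gM; rewrite !inE => /and3P[fE vf _] /and3P[gE vg _].
  by apply: (edge_eq fE gE _ vf ptf vg ptg); apply: contraNneq vP => ->.
rewrite -(card_in_imset pt_inj); apply/subset_leq_card/subsetP => _ /imsetP[f fM ->].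
by have /setIP[] := ptP f fM.
Qed.

Lemma edge_avoiding v (P : {set T}) (X : {set {set T}}) :
  v \notin P -> #|P| + #|X| < deg E v ->
  exists f, [/\ f \in E, v \in f, f \notin X & [disjoint f & P]].
Proof.
move=> vP lt_deg.
have [f /and4P[*]|none] :=
  pickP [pred f | [&& f \in E, v \in f, f \notin X & [disjoint f & P]]].
  by exists f.
suff : deg E v <= #|P| + #|X| by rewrite leqNgt lt_deg.
apply: deg_le_hitting vP _ => f fE vf fX; apply/negP => fP.
by have := none f; rewrite /= fE vf fX fP.
Qed.

Lemma card_nbhd v : 0 < deg E v -> #|nbhd E v| = (deg E v).*2.+1.
Proof.
move=> dv; pose N := [set f in E | v \in f]; pose P := [set f :\ v | f in N].
have inj : {in N &, injective (fun f => f :\ v)}.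
  move=> f g; rewrite !inE => /andP[_ vf] /andP[_ vg] fg.
  by rewrite -(setD1K vf) -(setD1K vg) fg.
have triv : trivIset P.
  apply/trivIsetP => _ _ /imsetP[f fN ->] /imsetP[g gN ->] ne.
  apply/disjointP => u /setD1P[uv uf] /setD1P[_ ug].
  move: fN gN; rewrite !inE => /andP[fE vf] /andP[gE vg].
  by move: ne; rewrite (edge_eq fE gE uv uf vf ug vg) eqxx.
have card_cover : #|cover P| = (deg E v).*2.
  move: (leq_card_cover P).2; rewrite triv => /eqP->; rewrite big_imset //= -muln2.
  rewrite (eq_bigr (fun _ => 2)) ?sum_nat_const // => f.
  by rewrite inE => /andP[fE vf]; rewrite card_edgeD1.
have -> : nbhd E v = v |: cover P.
  apply/setP => u; rewrite cover_imset in_setU1; apply/bigcupP/idP.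
    case=> f /andP[fE vf] uf; have [->|uv] := eqVneq u v; rewrite ?eqxx //.
    by apply/orP; right; apply/bigcupP; exists f; rewrite ?inE ?fE ?vf ?uv.
  case/orP => [/eqP->|/bigcupP[f]].
    by have /card_gt0P[f] := dv; rewrite inE => /andP[fE vf]; exists f; rewrite ?fE.
  by rewrite inE => /andP[fE vf] /setD1P[_ uf]; exists f; rewrite ?fE ?vf.
rewrite cardsU1 card_cover cover_imset.
suff -> : v \notin \bigcup_(f in N) (f :\ v) by [].
by apply/bigcupP => -[f _]; rewrite !inE eqxx.
Qed.

Lemma deg_le_nbhd u v : 0 < deg E u -> nbhd E v \subset nbhd E u ->
  deg E v <= deg E u.
Proof.
move=> du /subset_leq_card; have [->//|dv] := posnP (deg E v).
by rewrite !card_nbhd // ltnS leq_double.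
Qed.

Lemma card_edges_through2_le1 u v : u != v ->
  #|[set f in E | (u \in f) && (v \in f)]| <= 1.
Proof.
move=> uv; apply/card_le1_eqP => f g; rewrite !inE => /and3P[fE uf vf] /and3P[gE ug vg].
exact: edge_eq gE fE uv ug vg uf vf.
Qed.

Lemma edge_avoiding1 v (P : {set T}) g : v \notin P -> #|P|.+1 < deg E v ->
  exists f, [/\ f \in E, v \in f, f != g & [disjoint f & P]].
Proof.
move=> vP; rewrite -addn1 -(cards1 g) => /(edge_avoiding vP)[f [fE vf fg fP]].
by exists f; rewrite inE in fg.
Qed.

Section Center.
Variables a b c : T.
Hypothesis abcE : [set a; b; c] \in E.
Local Notation e := [set a; b; c].

Lemma notin_edge_center f u v : f \in E -> f != e -> u \in e -> v \in e ->
  v != u -> u \in f -> v \notin f.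
Proof. by move=> fE fe ue ve vu uf; apply: (notin_edge abcE fE _ ue uf ve vu); rewrite eq_sym. Qed.

Lemma notin_legs B C : B \in E -> C \in E -> b \in B -> c \in C ->
  [disjoint B & C] -> a \notin B :|: C.
Proof.
move=> BE CE bB cC BC; have [ab ac bc] := edge_neq abcE.
rewrite in_setU negb_or; apply/andP; split; apply/negP => aX.
  have cB : c \in B by rewrite (edge_eq BE abcE ab aX bB) ?set31 ?set32 ?set33.
  by rewrite (disjointFr BC cB) in cC.
have bC : b \in C by rewrite (edge_eq CE abcE ac aX cC) ?set31 ?set32 ?set33.
by rewrite (disjointFl BC bC) in bB.
Qed.

Lemma legs_meet B C f : B \in E -> C \in E -> b \in B -> c \in C ->
  [disjoint B & C] -> f \in E -> a \in f -> f != e ->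
  ~~ [disjoint f & (B :\ b) :|: (C :\ c)].
Proof.
move=> BE CE bB cC BC fE af fe; have [ab ac bc] := edge_neq abcE.
have bf : b \notin f by apply: (notin_edge abcE fE _ (set31 a b c) af); rewrite ?set32 1?eq_sym.
have cf : c \notin f by apply: (notin_edge abcE fE _ (set31 a b c) af); rewrite ?set33 1?eq_sym.
apply/negP => fQ; apply: (no_crown abcE fE BE CE af bB cC _ _ BC).
  apply/disjointP => u uf uB; have ub : u != b by apply: contraNneq bf => <-.
  by move: (disjointFr fQ uf); rewrite !inE ub uB.
apply/disjointP => u uf uC; have uc : u != c by apply: contraNneq cf => <-.
by move: (disjointFr fQ uf); rewrite !inE uc uC orbT.
Qed.

Lemma deg_le_legs B C (R : {set T}) (X : {set {set T}}) :
  B \in E -> C \in E -> b \in B -> c \in C -> [disjoint B & C] -> e \in X ->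
  (forall f, f \in E -> a \in f -> f \notin X -> [disjoint f & R]) ->
  deg E a <= #|((B :\ b) :|: (C :\ c)) :\: R| + #|X|.
Proof.
move=> BE CE bB cC BC eX avoidR; apply: deg_le_hitting => [|f fE af fX].
  rewrite in_setD negb_and; apply/orP; right.
  apply: contra (notin_legs BE CE bB cC BC).
  by rewrite !inE => /orP[]/andP[_ ->]; rewrite ?orbT.
have fe : f != e by apply: contraNneq fX => ->.
apply: contra (legs_meet BE CE bB cC BC fE af fe) => fQ.
apply/disjointP => u uf uQ; have [uR|uR] := boolP (u \in R).
  by rewrite (disjointFr (avoidR f fE af fX) uf) in uR.
by move: (disjointFr fQ uf); rewrite in_setD uR uQ.
Qed.

Lemma deg_center_le5 : 4 <= deg E b -> 2 <= deg E c -> deg E a <= 5.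
Proof.
move=> db dc; have [ab ac bc] := edge_neq abcE; have cb : c != b by rewrite eq_sym.
have [C [CE cC Ce _]] : exists C, [/\ C \in E, c \in C, C != e & [disjoint C & set0]].
  by apply: edge_avoiding1; rewrite ?inE ?cards0.
have bC := notin_edge_center CE Ce (set33 a b c) (set32 a b c) bc cC.
have [B [BE bB Be BC]] : exists B, [/\ B \in E, b \in B, B != e & [disjoint B & C :\ c]].
  by apply: edge_avoiding1; rewrite ?in_setD1 ?(negbTE bC) ?andbF ?card_edgeD1.
have cB := notin_edge_center BE Be (set32 a b c) (set33 a b c) cb bB.
have disjBC : [disjoint B & C].
  apply/disjointP => u uB uC; have uc : u != c by apply: contraNneq cB => <-.
  by move: (disjointFr BC uB); rewrite in_setD1 uc uC.
have no_avoid f : f \in E -> a \in f -> f \notin [set e] -> [disjoint f & set0].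
  by move=> *; apply/disjointP => u _; rewrite inE.
apply: leq_trans (deg_le_legs BE CE bB cC disjBC (set11 e) no_avoid) _.
rewrite setD0 cards1 addn1 ltnS; apply: leq_trans (leq_card_setU _ _) _.
by rewrite !card_edgeD1.
Qed.

Lemma center_sub_nbhd : e \subset nbhd E a.
Proof. by apply/subsetP => u ue; apply/bigcupP; exists e; rewrite ?abcE ?set31. Qed.

Lemma legs_sub_nbhd B C : 5 <= deg E a -> B \in E -> C \in E -> b \in B -> c \in C ->
  [disjoint B & C] -> B \subset nbhd E a.
Proof.
move=> da BE CE bB cC BC; apply/subsetP => w wB.
have [->|wb] := eqVneq w b; first exact: (subsetP center_sub_nbhd _ (set32 a b c)).
apply: contraTT da => wN; rewrite -ltnNge ltnS.
have avoid_w f : f \in E -> a \in f -> f \notin [set e] -> [disjoint f & [set w]].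
  move=> fE af _; rewrite disjoint_sym disjoints1.
  by apply: contra wN => wf; apply/bigcupP; exists f; rewrite ?fE.
apply: leq_trans (deg_le_legs BE CE bB cC BC (set11 e) avoid_w) _.
have wQ : w \in (B :\ b) :|: (C :\ c) by rewrite !inE wb wB.
have Q4 : #|(B :\ b) :|: (C :\ c)| <= 4.
  by apply: leq_trans (leq_card_setU _ _) _; rewrite !card_edgeD1.
by move: Q4; rewrite cards1 addn1 (cardsD1 w) wQ.
Qed.

Lemma edge_sub_nbhd B : 5 <= deg E a -> 4 <= deg E c -> B \in E -> b \in B ->
  B \subset nbhd E a.
Proof.
move=> da dc BE bB; have [->|Be] := eqVneq B e; first exact: center_sub_nbhd.
have [ab ac bc] := edge_neq abcE; have cb : c != b by rewrite eq_sym.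
have cB := notin_edge_center BE Be (set32 a b c) (set33 a b c) cb bB.
have [C [CE cC Ce BC]] : exists C, [/\ C \in E, c \in C, C != e & [disjoint C & B :\ b]].
  by apply: edge_avoiding1; rewrite ?in_setD1 ?(negbTE cB) ?andbF ?card_edgeD1.
have bC := notin_edge_center CE Ce (set33 a b c) (set32 a b c) bc cC.
apply: (legs_sub_nbhd da BE CE bB cC); apply/disjointP => u uB uC.
have ub : u != b by apply: contraNneq bC => <-.
by move: (disjointFr BC uC); rewrite in_setD1 ub uB.
Qed.

Lemma leg_sub_nbhd f d d' k : 5 <= deg E a ->
  [set d; c; k] \in E -> [set d'; b; k] \in E ->
  f \in E -> b \in f -> a \notin f -> d \notin f -> d' \notin f -> f \subset nbhd E a.
Proof.
move=> da LE KE fE bf af df d'f; have [_ _ bc] := edge_neq abcE; have [_ _ bk] := edge_neq KE.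
have cb : c != b by rewrite eq_sym.
have kb : k != b by rewrite eq_sym.
have ef : e != f by apply: contraNneq af => <-; apply: set31.
have cf := notin_edge abcE fE ef (set32 a b c) bf (set33 a b c) cb.
have Kf : [set d'; b; k] != f by apply: contraNneq d'f => <-; apply: set31.
have kf := notin_edge KE fE Kf (set32 d' b k) bf (set33 d' b k) kb.
apply: (legs_sub_nbhd da fE LE bf (set32 d c k)).
by rewrite disjoint_sym disjoint_set3 df cf kf.
Qed.

End Center.

(* Crown at the centre [set b; v; m] with legs [set c; v; k] and P: the edges at b
   other than e and the centre avoid a and c, so they must meet k or the third vertex
   of P. *)
Lemma deg_le4_crossing a b c v k m P : [set a; b; c] \in E ->
  [set c; v; k] \in E -> [set c; v; k] != [set a; b; c] ->
  [set b; v; m] \in E -> [set b; v; m] != [set a; b; c] ->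
  P \in E -> a \in P -> m \in P -> k \notin P -> deg E b <= 4.
Proof.
move=> abcE CE Ce QE Qe PE aP mP kP; have [ab ac bc] := edge_neq abcE.
have [cv _ _] := edge_neq CE; have [_ bm vm] := edge_neq QE.
have cb : c != b by rewrite eq_sym.
have ca : c != a by rewrite eq_sym.
have mb : m != b by rewrite eq_sym.
have aQ := notin_edge_center abcE QE Qe (set32 a b c) (set31 a b c) ab (set31 b v m).
have am : a != m by apply: contraNneq aQ => ->; apply: set33.
have mE := notin_edge QE abcE Qe (set31 b v m) (set32 a b c) (set33 b v m) mb.
have Pe : P != [set a; b; c] by apply: contraNneq mE => <-.
have cP := notin_edge_center abcE PE Pe (set31 a b c) (set33 a b c) ca aP.
have QP : [set b; v; m] != P by apply: contraNneq aQ => ->.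
have vP := notin_edge QE PE QP (set33 b v m) mP (set32 b v m) vm.
have CP : [disjoint [set c; v; k] & P] by rewrite disjoint_set3 cP vP kP.
have avoid_ac f : f \in E -> b \in f -> f \notin [set [set b; v; m]; [set a; b; c]] ->
    [disjoint f & [set a; c]].
  move=> fE bf; rewrite !inE negb_or => /andP[_ fe].
  have af := notin_edge_center abcE fE fe (set32 a b c) (set31 a b c) ab bf.
  have cf := notin_edge_center abcE fE fe (set32 a b c) (set33 a b c) cb bf.
  apply/disjointP => u uf /set2P[] uE; rewrite uE in uf.
    by rewrite uf in af.
  by rewrite uf in cf.
have acQ : [set a; c] \subset ([set c; v; k] :\ v) :|: (P :\ m).
  by apply/subsetP => u; rewrite !inE => /orP[]/eqP->; rewrite ?eqxx ?cv ?am ?aP ?orbT.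
have Q4 : #|([set c; v; k] :\ v) :|: (P :\ m)| <= 4.
  by apply: leq_trans (leq_card_setU _ _) _; rewrite !card_edgeD1 ?set32.
have := deg_le_legs QE CE PE (set32 c v k) mP CP (setU11 _ _) avoid_ac.
rewrite (cardsDS acQ) cards2 ac cards2 Qe => /leq_trans; apply.
by rewrite addn2 !ltnS leq_subLR.
Qed.

Lemma closing_edge a b c v k m : [set a; b; c] \in E ->
  5 <= deg E a -> 5 <= deg E b -> 4 <= deg E c ->
  [set c; v; k] \in E -> [set c; v; k] != [set a; b; c] ->
  [set b; v; m] \in E -> [set b; v; m] != [set a; b; c] ->
  [set a; k; m] \in E.
Proof.
move=> abcE da db dc CE Ce QE Qe; have [ab ac bc] := edge_neq abcE.
have [_ _ vk] := edge_neq CE; have cb : c != b by rewrite eq_sym.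
have aC := notin_edge_center abcE CE Ce (set33 a b c) (set31 a b c) ac (set31 c v k).
have aQ := notin_edge_center abcE QE Qe (set32 a b c) (set31 a b c) ab (set31 b v m).
have cQ := notin_edge_center abcE QE Qe (set32 a b c) (set33 a b c) cb (set31 b v m).
have /bigcupP[P /andP[PE aP] mP] : m \in nbhd E a.
  exact: (subsetP (edge_sub_nbhd abcE da dc QE (set31 b v m))) _ (set33 b v m).
have [kP|kP] := boolP (k \in P); last first.
  by have := deg_le4_crossing abcE CE Ce QE Qe PE aP mP kP; rewrite leqNgt db.
have ak : a != k by apply: contraNneq aC => ->; apply: set33.
have am : a != m by apply: contraNneq aQ => ->; apply: set33.
have km : k != m.
  apply: contraNneq cQ => km; rewrite -(edge_eq CE QE vk) ?set31 ?km ?set32 ?set33 //.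
by rewrite -(edge_set3 PE aP kP mP ak am km).
Qed.

Section Wing.
Variables x y z : T.
Hypothesis xyzE : [set x; y; z] \in E.
Hypotheses (dx : 5 <= deg E x) (dy : 5 <= deg E y) (dz : 4 <= deg E z).
Local Notation e := [set x; y; z].

Definition wing a1 a2 a3 a4 :=
  [/\ [set z; a1; a3] \in E, [set x; a1; a2] \in E, [set y; a1; a4] \in E,
      [set x; a3; a4] \in E & [set y; a3; a2] \in E].

Lemma wing_sym a1 a2 a3 a4 : wing a1 a2 a3 a4 -> wing a3 a4 a1 a2.
Proof. by case=> *; split; rewrite // set3C23. Qed.

Lemma wing_notin12 a1 a2 a3 a4 : wing a1 a2 a3 a4 -> a1 \notin e /\ a2 \notin e.
Proof.
case=> CE X1E Y1E _ Y2E; have [_ xz _] := edge_neq xyzE.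
have [za1 _ _] := edge_neq CE; have [xa1 xa2 _] := edge_neq X1E.
have [ya1 _ _] := edge_neq Y1E; have [_ ya2 _] := edge_neq Y2E.
have a1e : a1 \notin e by rewrite !inE !negb_or ![a1 == _]eq_sym xa1 ya1 za1.
split=> //; rewrite !inE !negb_or ![a2 == _]eq_sym xa2 ya2 /=.
apply: contra a1e => /eqP a2z; have zX1 : z \in [set x; a1; a2] by rewrite a2z set33.
by rewrite -(edge_eq X1E xyzE xz (set31 _ _ _) zX1 (set31 _ _ _) (set33 _ _ _)) set32.
Qed.

Lemma wing_notin a1 a2 a3 a4 u : wing a1 a2 a3 a4 ->
  u \in [set a1; a2; a3; a4] -> u \notin e.
Proof.
move=> w; have [n1 n2] := wing_notin12 w; have [n3 n4] := wing_notin12 (wing_sym w).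
by case/set4P => ->.
Qed.

Lemma wing_of_zedge a1 a3 : [set z; a1; a3] \in E -> [set z; a1; a3] != e ->
  exists a2 a4, wing a1 a2 a3 a4.
Proof.
move=> CE Ce; have [za1 _ _] := edge_neq CE; have a1z : a1 != z by rewrite eq_sym.
have a1e := notin_edge CE xyzE Ce (set31 z a1 a3) (set33 x y z) (set32 z a1 a3) a1z.
have xa1 : x != a1 by apply: contraNneq a1e => <-; apply: set31.
have ya1 : y != a1 by apply: contraNneq a1e => <-; apply: set32.
have xzyE : [set x; z; y] \in E by rewrite -set3C23.
have yxzE : [set y; x; z] \in E by rewrite (set3C12 y x z).
have yzxE : [set y; z; x] \in E by rewrite -set3C23.
have /bigcupP[A /andP[AE xA] a1A] :=
  subsetP (edge_sub_nbhd xzyE dx (ltnW dy) CE (set31 _ _ _)) a1 (set32 _ _ _).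
have /bigcupP[B /andP[BE yB] a1B] :=
  subsetP (edge_sub_nbhd yzxE dy (ltnW dx) CE (set31 _ _ _)) a1 (set32 _ _ _).
have [a2 eA] := edge_through2 AE xA a1A xa1; have [a4 eB] := edge_through2 BE yB a1B ya1.
rewrite {}eA in AE; rewrite {}eB in BE; exists a2, a4; split=> //.
  apply: (closing_edge xyzE dx dy dz CE Ce BE).
  by apply: contraNneq a1e => <-; apply: set32.
apply: (closing_edge yxzE dy dx dz CE _ AE); rewrite (set3C12 y x z) //.
by apply: contraNneq a1e => <-; apply: set32.
Qed.

Lemma wing_zedge a1 a2 a3 a4 v : wing a1 a2 a3 a4 -> [set z; a2; v] \in E -> v = a4.
Proof.
move=> w ZE; have a2e : a2 \notin e by apply: (wing_notin w); rewrite !inE eqxx ?orbT.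
case: w => _ _ _ X2E Y2E; rewrite set3C23 in Y2E.
have Ze : [set z; a2; v] != e by apply: contraNneq a2e => <-; apply: set32.
have Y2e : [set y; a2; a3] != e by apply: contraNneq a2e => <-; apply: set32.
have XE := closing_edge xyzE dx dy dz ZE Ze Y2E Y2e.
have [xv xa3 va3] := edge_neq XE.
have : v \in [set x; a3; a4].
  by rewrite -(edge_eq XE X2E xa3 (set31 _ _ _) (set33 _ _ _) (set31 _ _ _) (set32 _ _ _)) set32.
by case/set3P => vE //; rewrite vE eqxx in xv va3.
Qed.

Lemma wing_zedge_cases a1 a2 a3 a4 f w : wing a1 a2 a3 a4 ->
  f \in E -> z \in f -> w \in f -> w \in [set a1; a2; a3; a4] ->
  f = [set z; a1; a3] \/ a2 \in f /\ a4 \in f.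
Proof.
suff half b1 b2 b3 b4 : wing b1 b2 b3 b4 -> f \in E -> z \in f -> w \in f ->
    w \in [set b1; b2] -> f = [set z; b1; b3] \/ b2 \in f /\ b4 \in f.
  move=> wa fE zf wf /set4P wQ.
  have [w12|w34] : w \in [set a1; a2] \/ w \in [set a3; a4].
    by case: wQ => ->; [left|left|right|right]; rewrite !inE eqxx ?orbT.
    exact: half.
  have [->|[a4f a2f]] := half _ _ _ _ (wing_sym wa) fE zf wf w34.
    by left; rewrite set3C23.
  by right.
move=> wb fE zf wf; have [CE _ _ _ _] := wb; have [zb1 _ _] := edge_neq CE.
case/set2P => wE; rewrite wE in wf.
  by left; apply: (edge_eq fE CE zb1 zf wf (set31 _ _ _) (set32 _ _ _)).
have b2e : b2 \notin e by apply: (wing_notin wb); rewrite !inE eqxx ?orbT.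
have zb2 : z != b2 by apply: contraNneq b2e => <-; apply: set33.
have [t ft] := edge_through2 fE zf wf zb2; rewrite ft in fE.
by right; rewrite ft -(wing_zedge wb fE) set32 set33.
Qed.

Lemma wing_pair a1 a2 a3 a4 f : wing a1 a2 a3 a4 -> f \in E ->
  x \notin f -> y \notin f -> z \notin f ->
  1 < #|f :&: [set a1; a2; a3; a4]| -> a2 \in f /\ a4 \in f.
Proof.
case=> CE X1E Y1E X2E Y2E fE xf yf zf.
case/card_gt1P => u [v [/setIP[uf uQ] /setIP[vf vQ] uv]].
(* Each pair other than {a2, a4} lies on an edge through x, y or z. *)
have out g d p q : g \in E -> d \in g -> d \notin f -> p \in g -> q \in g -> p != q ->
    (p \in f) && (q \in f) = false.
  move=> gE dg df pg qg pq; apply/negP => /andP[pf qf].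
  by rewrite (edge_eq fE gE pq pf qf pg qg) dg in df.
have [_ _ a1a3] := edge_neq CE; have [_ _ a1a2] := edge_neq X1E.
have [_ _ a1a4] := edge_neq Y1E; have [_ _ a3a4] := edge_neq X2E.
have [_ _ a3a2] := edge_neq Y2E.
have o13 := out _ _ _ _ CE (set31 _ _ _) zf (set32 _ _ _) (set33 _ _ _) a1a3.
have o12 := out _ _ _ _ X1E (set31 _ _ _) xf (set32 _ _ _) (set33 _ _ _) a1a2.
have o14 := out _ _ _ _ Y1E (set31 _ _ _) yf (set32 _ _ _) (set33 _ _ _) a1a4.
have o34 := out _ _ _ _ X2E (set31 _ _ _) xf (set32 _ _ _) (set33 _ _ _) a3a4.
have o32 := out _ _ _ _ Y2E (set31 _ _ _) yf (set32 _ _ _) (set33 _ _ _) a3a2.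
move: uf vf uv; case/set4P: uQ => ->; case/set4P: vQ => -> uf vf uv //;
  by [rewrite eqxx in uv | move: o13 o12 o14 o34 o32; rewrite uf vf].
Qed.

Lemma wing_sub_nbhd a1 a2 a3 a4 f w : wing a1 a2 a3 a4 -> f \in E ->
  [disjoint f & e] -> w \in f -> w \in [set a1; a2; a3; a4] -> f \subset nbhd E x.
Proof.
move=> wa fE fe wf; have xf := negbT (disjointFl fe (set31 x y z)).
have yf := negbT (disjointFl fe (set32 x y z)); have zf := negbT (disjointFl fe (set33 x y z)).
suff half b1 b2 b3 b4 : wing b1 b2 b3 b4 -> w \in [set b1; b2] -> f \subset nbhd E x.
  case/set4P => wE; [apply: (half _ _ _ _ wa) | apply: (half _ _ _ _ wa)
    | apply: (half _ _ _ _ (wing_sym wa)) | apply: (half _ _ _ _ (wing_sym wa))];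
  by rewrite wE !inE eqxx ?orbT.
case=> CE X1E _ _ Y2E; rewrite set3C23 in Y2E; case/set2P => wE; rewrite wE in wf.
  exact: (leg_sub_nbhd X1E dx Y2E CE fE wf xf yf zf).
by rewrite set3C23 in X1E; apply: (leg_sub_nbhd X1E dx CE Y2E fE wf xf zf yf).
Qed.

Lemma two_wings : exists a1 a2 a3 a4 b1 b2 b3 b4,
  [/\ wing a1 a2 a3 a4, wing b1 b2 b3 b4 &
      [disjoint [set a1; a2; a3; a4] & [set z; b1; b3]]].
Proof.
have [C1 [C1E zC1 C1e _]] : exists C, [/\ C \in E, z \in C, C != e & [disjoint C & set0]].
  by apply: edge_avoiding1; rewrite ?inE ?cards0 //; exact: ltnW (ltnW dz).
have [a1 [a3 eC1]] := edge_through C1E zC1; rewrite {}eC1 in C1E C1e.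
have [a2 [a4 wa]] := wing_of_zedge C1E C1e.
have a2e : a2 \notin e by apply: (wing_notin wa); rewrite !inE eqxx ?orbT.
have a4e : a4 \notin e by apply: (wing_notin wa); rewrite !inE eqxx ?orbT.
have [C2 [C2E zC2 C2X C2a2]] : exists C, [/\ C \in E, z \in C,
    C \notin [set e; [set z; a1; a3]] & [disjoint C & [set a2]]].
  apply: edge_avoiding; last by rewrite cards1 cards2; apply: (leq_trans _ dz); case: (_ != _).
  by rewrite inE; apply: contraNneq a2e => <-; apply: set33.
move: C2X; rewrite !inE negb_or => /andP[C2e C2C1].
have [b1 [b3 eC2]] := edge_through C2E zC2; rewrite {}eC2 in C2E C2e C2C1 C2a2.
have [b2 [b4 wb]] := wing_of_zedge C2E C2e.
exists a1, a2, a3, a4, b1, b2, b3, b4; split=> //.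
have a2C2 : a2 \notin [set z; b1; b3] by rewrite -disjoints1 disjoint_sym.
have C1C2 : [set z; a1; a3] != [set z; b1; b3] by rewrite eq_sym.
have [za1 za3 _] := edge_neq C1E.
have a1z : a1 != z by rewrite eq_sym.
have a3z : a3 != z by rewrite eq_sym.
have a1C2 := notin_edge C1E C2E C1C2 (set31 _ _ _) (set31 _ _ _) (set32 _ _ _) a1z.
have a3C2 := notin_edge C1E C2E C1C2 (set31 _ _ _) (set31 _ _ _) (set33 _ _ _) a3z.
(* C2 was chosen to avoid a2, and [wing_zedge] then keeps it off a4. *)
have a4C2 : a4 \notin [set z; b1; b3].
  apply: contra a2C2 => a4C2; have za4 : z != a4 by apply: contraNneq a4e => <-; apply: set33.
  have [t et] := edge_through2 C2E (set31 _ _ _) a4C2 za4; rewrite et in C2E *.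
  by rewrite -(wing_zedge (wing_sym wa) C2E) set33.
by apply/disjointP => u /set4P[]-> ; apply/negP.
Qed.

Lemma x_edges_wings a1 a2 a3 a4 b1 b2 b3 b4 f :
  wing a1 a2 a3 a4 -> wing b1 b2 b3 b4 ->
  [disjoint [set a1; a2; a3; a4] & [set z; b1; b3]] -> f \in E -> x \in f ->
  f \in [:: e; [set x; a1; a2]; [set x; a3; a4]; [set x; b1; b2]; [set x; b3; b4]].
Proof.
move=> wa wb ab fE xf; set xs := [:: e; _; _; _; _].
have [CaE X1E _ X2E Y2aE] := wa; have [CbE X3E _ X4E Y2bE] := wb.
have third c1 c2 c3 c4 : [set z; c1; c3] \in E -> [set x; c3; c4] \in E ->
    [set y; c3; c2] \in E -> c3 \notin [set x; c1; c2].
  move=> CcE XcE YcE; have [_ _ c1c3] := edge_neq CcE.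
  have [xc3 _ _] := edge_neq XcE; have [_ _ c3c2] := edge_neq YcE.
  by rewrite !inE !negb_or eq_sym xc3 eq_sym c1c3 c3c2.
have [a1Q a2Q a3Q a4Q] : [/\ a1 \in [set a1; a2; a3; a4], a2 \in [set a1; a2; a3; a4],
    a3 \in [set a1; a2; a3; a4] & a4 \in [set a1; a2; a3; a4]].
  by split; rewrite !inE eqxx ?orbT.
have off b p q : b \in [set z; b1; b3] -> b \notin e ->
    p \in [set a1; a2; a3; a4] -> q \in [set a1; a2; a3; a4] -> b \notin [set x; p; q].
  move=> bC be pQ qQ; have bQ := disjointFl ab bC.
  by apply/negP => /set3P[] bE; move: be bQ; rewrite bE ?set31 ?pQ ?qQ.
have a1e : a1 \notin e by apply: (wing_notin wa).
have a3e : a3 \notin e by apply: (wing_notin wa).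
have b1e : b1 \notin e by apply: (wing_notin wb); rewrite !inE eqxx.
have b3e : b3 \notin e by apply: (wing_notin wb); rewrite !inE eqxx ?orbT.
have a3X1 := third _ _ _ _ CaE X2E Y2aE; have b3X3 := third _ _ _ _ CbE X4E Y2bE.
have b1X1 := off _ _ _ (set32 z b1 b3) b1e a1Q a2Q.
have b1X2 := off _ _ _ (set32 z b1 b3) b1e a3Q a4Q.
have b3X1 := off _ _ _ (set33 z b1 b3) b3e a1Q a2Q.
have b3X2 := off _ _ _ (set33 z b1 b3) b3e a3Q a4Q.
have ne (A : {set T}) w q : w \notin A -> A != [set x; w; q].
  by move=> wA; apply: contraNneq wA => ->; apply: set32.
have xs_uniq : uniq xs.
  by rewrite /= !inE !negb_or !andbT; repeat (apply/andP; split); apply: ne.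
suff /eqP/setP/(_ f) : [set g in xs] == [set g in E | x \in g] by rewrite !inE fE xf.
rewrite eqEcard; apply/andP; split.
  apply/subsetP => g; rewrite !inE => /orP[/eqP->|/or4P[]/eqP->];
    by rewrite ?xyzE ?X1E ?X2E ?X3E ?X4E set31.
rewrite [X in _ <= X]cardsE (card_uniqP xs_uniq).
exact: deg_center_le5 xyzE (ltnW dy) (ltnW (ltnW dz)).
Qed.

Lemma nbhd_wings a1 a2 a3 a4 b1 b2 b3 b4 u :
  wing a1 a2 a3 a4 -> wing b1 b2 b3 b4 ->
  [disjoint [set a1; a2; a3; a4] & [set z; b1; b3]] -> u \in nbhd E x ->
  [\/ u \in e, u \in [set a1; a2; a3; a4] | u \in [set b1; b2; b3; b4]].
Proof.
move=> wa wb ab /bigcupP[f /andP[fE xf] uf].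
have fxs := x_edges_wings wa wb ab fE xf; rewrite !inE in fxs.
case/orP: fxs => [/eqP fe|/or4P[]/eqP fX]; first by constructor 1; rewrite -fe.
all: rewrite fX in uf; case/set3P: uf => ->.
all: by [constructor 1; rewrite !inE eqxx | constructor 2; rewrite !inE eqxx ?orbT
  | constructor 3; rewrite !inE eqxx ?orbT].
Qed.

Lemma wing_neq24 a1 a2 a3 a4 : wing a1 a2 a3 a4 -> a2 != a4.
Proof.
case=> _ X1E Y1E _ _; have [xy _ _] := edge_neq xyzE; have [xa1 xa2 a1a2] := edge_neq X1E.
apply: contraTneq Y1E => <-; apply/negP => Y1E.
have := set31 x a1 a2; rewrite (edge_eq X1E Y1E a1a2) ?set32 ?set33 //.
by case/set3P => /eqP; rewrite ?(negbTE xy) ?(negbTE xa1) ?(negbTE xa2).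
Qed.

Lemma touching_eq_nbhd : \bigcup_(f in E | f :&: e != set0) f = nbhd E x.
Proof.
apply/eqP; rewrite eqEsubset; apply/andP; split; apply/subsetP => u /bigcupP[f /andP[fE]].
  case/set0Pn => t /setIP[tf /set3P[] tE] uf; rewrite tE in tf.
  - by apply/bigcupP; exists f; rewrite ?fE.
  - exact: subsetP (edge_sub_nbhd xyzE dx dz fE tf) u uf.
  - have xzyE : [set x; z; y] \in E by rewrite -set3C23.
    exact: subsetP (edge_sub_nbhd xzyE dx (ltnW dy) fE tf) u uf.
move=> xf uf; apply/bigcupP; exists f => //; rewrite fE; apply/set0Pn; exists x.
by rewrite inE xf set31.
Qed.

Section TwoWings.
Variables a1 a2 a3 a4 b1 b2 b3 b4 : T.
Hypotheses (wa : wing a1 a2 a3 a4) (wb : wing b1 b2 b3 b4).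
Hypothesis wa_wb : [disjoint [set a1; a2; a3; a4] & [set z; b1; b3]].

Lemma nbhd_closed f : f \in E -> f :&: nbhd E x != set0 -> f \subset nbhd E x.
Proof.
move=> fE /set0Pn[w /setIP[wf wN]].
have [fe|fe] := boolP [disjoint f & e]; last first.
  rewrite -touching_eq_nbhd; apply/subsetP => u uf; apply/bigcupP; exists f => //.
  by rewrite fE setI_eq0.
case: (nbhd_wings wa wb wa_wb wN) => [we|wQ|wQ].
- by rewrite (disjointFr fe wf) in we.
- exact: wing_sub_nbhd wa fE fe wf wQ.
- exact: wing_sub_nbhd wb fE fe wf wQ.
Qed.

Lemma meeting_edges_sub :
  [set f in E | f :&: nbhd E x != set0] \subset
    [set f in E | x \in f] :|: [set f in E | y \in f] :|:
    [set [set z; a1; a3]; [set z; b1; b3]] :|: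
    [set f in E | (a2 \in f) && (a4 \in f)] :|: [set f in E | (b2 \in f) && (b4 \in f)].
Proof.
apply/subsetP => f; rewrite inE => /andP[fE fN]; have fsub := nbhd_closed fE fN.
have [xf|xf] := boolP (x \in f); first by rewrite !inE fE xf.
have [yf|yf] := boolP (y \in f); first by rewrite !inE fE yf !orbT.
have where_f u : u \in f ->
    [\/ u = z, u \in [set a1; a2; a3; a4] | u \in [set b1; b2; b3; b4]].
  move=> uf; case: (nbhd_wings wa wb wa_wb (subsetP fsub u uf)) => [/set3P[]uE|uQ|uQ];
    first [by constructor 1 | by constructor 2 | by constructor 3 | move: uf; rewrite uE].
    by rewrite (negbTE xf).
  by rewrite (negbTE yf).
have [zf|zf] := boolP (z \in f).
  have [w /setD1P[wz wf]] : exists w, w \in f :\ z.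
    by apply/set0Pn; rewrite -card_gt0 card_edgeD1.
  case: (where_f w wf) => [/eqP|wQ|wQ]; first by rewrite (negbTE wz).
    case: (wing_zedge_cases wa fE zf wf wQ) => [->|[a2f a4f]]; first by rewrite !inE eqxx !orbT.
    by rewrite !inE fE a2f a4f !orbT.
  case: (wing_zedge_cases wb fE zf wf wQ) => [->|[b2f b4f]]; first by rewrite !inE eqxx !orbT.
  by rewrite !inE fE b2f b4f !orbT.
have : #|f| <= #|f :&: [set a1; a2; a3; a4]| + #|f :&: [set b1; b2; b3; b4]|.
  apply: leq_trans (leq_card_setU _ _); apply/subset_leq_card/subsetP => u uf.
  rewrite !in_setU !in_setI uf.
  case: (where_f u uf) => [uz|->|->]; rewrite ?orbT //.
  by rewrite -uz uf in zf.
rewrite (card_edge fE); case: (ltnP 1 #|f :&: [set a1; a2; a3; a4]|) => [gtA|leA].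
  by have [a2f a4f] := wing_pair wa fE xf yf zf gtA; rewrite !inE fE a2f a4f !orbT.
case: (ltnP 1 #|f :&: [set b1; b2; b3; b4]|) => [gtB|leB].
  by have [b2f b4f] := wing_pair wb fE xf yf zf gtB; rewrite !inE fE b2f b4f !orbT.
by move/leq_trans/(_ (leq_add leA leB)).
Qed.

Lemma card_meeting_le13 : #|[set f in E | f :&: nbhd E x != set0]| <= 13.
Proof.
have cardU (A B : {set {set T}}) m n : #|A| <= m -> #|B| <= n -> #|A :|: B| <= m + n.
  by move=> leA leB; apply: leq_trans (leq_card_setU A B) (leq_add leA leB).
have yxzE : [set y; x; z] \in E by rewrite (set3C12 y x z).
set Ex := [set f in E | x \in f]; set Ey := [set f in E | y \in f].
have dx5 : #|Ex| <= 5 := deg_center_le5 xyzE (ltnW dy) (ltnW (ltnW dz)).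
have dy5 : #|Ey| <= 5 := deg_center_le5 yxzE (ltnW dx) (ltnW (ltnW dz)).
have cxy : #|Ex :|: Ey| <= 9.
  have e_xy : 0 < #|Ex :&: Ey| by apply/card_gt0P; exists e; rewrite !inE xyzE !eqxx ?orbT.
  rewrite -(leq_add2r #|Ex :&: Ey|) cardsUI; apply: leq_trans (leq_add dx5 dy5) _.
  by rewrite -[5 + 5]/(9 + 1) leq_add2l.
have c2 : #|[set [set z; a1; a3]; [set z; b1; b3]]| <= 2 by rewrite cards2; case: (_ != _).
apply: leq_trans (subset_leq_card meeting_edges_sub) _.
apply: (cardU _ _ 12 1); last exact: card_edges_through2_le1 (wing_neq24 wb).
apply: (cardU _ _ 11 1); last exact: card_edges_through2_le1 (wing_neq24 wa).
exact: cardU _ _ 9 2 cxy c2.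
Qed.

End TwoWings.
End Wing.

End LinearCrownFree.

Theorem lemma2p1 (T : finType) (E : {set {set T}}) (x y z : T) :
  linear3 E -> crown_free E ->
  [set x; y; z] \in E ->
  5 <= deg E x -> 5 <= deg E y -> 4 <= deg E z ->
  let S := \bigcup_(f in E | f :&: [set x; y; z] != set0) f in
  let ES := [set f in E | f :&: S != set0] in
  [/\ #|S| = 11,
      (forall v, v \in S -> deg E v <= 5),
      #|ES| <= 13 &
      (forall f, f \in ES -> f \subset S)].
Proof.
move=> [card_edge linearE] crown_freeE xyzE dx dy dz S ES.
have [a1 [a2 [a3 [a4 [b1 [b2 [b3 [b4 [wa wb wa_wb]]]]]]]]] :=
  two_wings card_edge linearE crown_freeE xyzE dx dy dz.
have closed := nbhd_closed card_edge linearE crown_freeE xyzE dx dy dz wa wb wa_wb.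
have deg_x : deg E x = 5.
  apply/eqP; rewrite eqn_leq dx andbT.
  apply: (deg_center_le5 card_edge linearE crown_freeE xyzE); first exact: ltnW.
  exact: ltnW (ltnW dz).
rewrite /ES /S (touching_eq_nbhd card_edge linearE crown_freeE xyzE dx dy dz); split.
- by rewrite (card_nbhd card_edge linearE) deg_x.
- move=> v vN; rewrite -deg_x; apply: (deg_le_nbhd card_edge linearE); first by rewrite deg_x.
  apply/subsetP => u /bigcupP[f /andP[fE vf] uf]; apply: (subsetP (closed f fE _)) uf.
  by apply/set0Pn; exists v; rewrite inE vf.
- exact: (card_meeting_le13 card_edge linearE crown_freeE xyzE dx dy dz wa wb wa_wb).
- by move=> f; rewrite inE => /andP[]; apply: closed.
Qed.
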